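(* Consider a finite discounted MDP with rewards in $[0,1]$ and an initial state distribution $\mu$ with $\min_s\mu(s)>0$, and run the on-policy stochastic natural policy gradient algorithm described in the context with constant learning rate $\eta>0$. Then for all $t\ge1$: $V^{\pi_{\theta_{t+1}}}(s_0) - V^{\pi_{\theta_t}}(s_0)\ge 0$ almost surely for every $s_0\in\mathcal{S}$, and $$\mathbb{E}_t\left[V^{\pi_{\theta_{t+1}}}(\mu)\right] - V^{\pi_{\theta_t}}(\mu) \ge \frac{\eta(1-\gamma)^4\min_s\mu(s)}{1+\eta}\cdot\left\|\frac{d_\mu^{\pi^*}}{\mu}\right\|_\infty^{-1}\cdot\frac{\min_s\pi_{\theta_t}(a^*(s)\mid s)^2}{S}\cdot\left(V^{\pi^*}(\mu) - V^{\pi_{\theta_t}}(\mu)\right)^2,$$ where $\mathbb{E}_t$ is over the sampling $s_t\sim d_\mu^{\pi_{\theta_t}}(\cdot)$ and $a_t\sim\pi_{\theta_t}(\cdot\mid s_t)$ given $\theta_t$.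
   Context: A finite MDP is $(\mathcal{S},\mathcal{A},r,\mathcal{P},\gamma)$ with finite state and action sets, $S:=|\mathcal{S}|$, $r:\mathcal{S}\times\mathcal{A}\to[0,1]$, transition kernel $\mathcal{P}$, $\gamma\in[0,1)$. Softmax policy $\pi_\theta(a\mid s) = e^{\theta(s,a)}/\sum_{a'}e^{\theta(s,a')}$. $V^\pi(s) = \mathbb{E}[\sum_{t\ge0}\gamma^t r(s_t,a_t)\mid s_0=s]$, $Q^\pi(s,a) = r(s,a)+\gamma\sum_{s'}\mathcal{P}(s'\mid s,a)V^\pi(s')$, $V^\pi(\mu) = \mathbb{E}_{s\sim\mu}V^\pi(s)$, $d_\mu^\pi(s) = \mathbb{E}_{s_0\sim\mu}[(1-\gamma)\sum_{t\ge0}\gamma^t\Pr(s_t=s\mid s_0,\pi,\mathcal{P})]$. $\pi^*$ is an optimal deterministic policy with action $a^*(s)$ in state $s$. $\left\|\frac{d_\mu^{\pi^*}}{\mu}\right\|_\infty := \max_s d_\mu^{\pi^*}(s)/\mu(s)$. Algorithm: at iteration $t$, sample $s_t\sim d_\mu^{\pi_{\theta_t}}(\cdot)$, $a_t\sim\pi_{\theta_t}(\cdot\mid s_t)$, set $\theta_{t+1}(s_t,a_t) = \theta_t(s_t,a_t)+\eta\frac{Q^{\pi_{\theta_t}}(s_t,a_t)-V^{\pi_{\theta_t}}(s_t)}{\pi_{\theta_t}(a_t\mid s_t)}$, other coordinates unchanged. *)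

From HB Require Import structures.
From mathcomp Require Import all_boot all_order all_algebra.
From mathcomp Require Import all_classical all_reals all_analysis.
Set Implicit Arguments. Unset Strict Implicit. Unset Printing Implicit Defensive.
Import Order.TTheory GRing.Theory Num.Theory.
Local Open Scope ring_scope.

Section MDP.
Variables (R : realType) (S A : finType).
(* reward r, transition kernel P s a s' = P(s' | s, a), discount g *)
Variables (r : S -> A -> R) (P : S -> A -> S -> R) (g : R).

(* A (stochastic) policy is a function pol s a = pol(a | s). *)
Definition is_policy (pol : S -> A -> R) : Prop :=
  (forall s a, 0 <= pol s a) /\ (forall s, \sum_(a : A) pol s a = 1).

Definition softmax (theta : S -> A -> R) : S -> A -> R :=
  fun s a => expR (theta s a) / \sum_(a' : A) expR (theta s a').

Definition det_policy (astar : S -> A) : S -> A -> R :=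
  fun s a => (a == astar s)%:R.

Fixpoint state_prob (pol : S -> A -> R) (s0 : S) (t : nat) : S -> R :=
  match t with
  | 0 => fun s => (s == s0)%:R
  | t'.+1 => fun s' =>
      \sum_(s : S) \sum_(a : A) state_prob pol s0 t' s * pol s a * P s a s'
  end.

Definition V (pol : S -> A -> R) (s0 : S) : R :=
  limn (fun n => \sum_(0 <= t < n)
    g ^+ t * \sum_(s : S) \sum_(a : A) state_prob pol s0 t s * pol s a * r s a).

Definition Q (pol : S -> A -> R) (s : S) (a : A) : R :=
  r s a + g * \sum_(s' : S) P s a s' * V pol s'.

Definition Vmu (mu : S -> R) (pol : S -> A -> R) : R :=
  \sum_(s : S) mu s * V pol s.

Definition dvisit (mu : S -> R) (pol : S -> A -> R) (s : S) : R :=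
  \sum_(s0 : S) mu s0 * ((1 - g) *
     limn (fun n => \sum_(0 <= t < n) g ^+ t * state_prob pol s0 t s)).

Definition npg_update (eta : R) (theta : S -> A -> R) (st : S) (at_ : A)
  : S -> A -> R :=
  fun s a =>
    if (s == st) && (a == at_) then
      theta st at_ + eta * (Q (softmax theta) st at_ - V (softmax theta) st)
                           / softmax theta st at_
    else theta s a.

Definition expected_next_Vmu (mu : S -> R) (eta : R) (theta : S -> A -> R) : R :=
  \sum_(s : S) \sum_(a : A)
     dvisit mu (softmax theta) s * softmax theta s a
       * Vmu mu (softmax (npg_update eta theta s a)).

(* || d_mu^{pi*} / mu ||_oo  (all terms are positive, so 0 is a neutral seed) *)
Definition dist_mismatch (mu : S -> R) (astar : S -> A) : R :=
  \big[Num.max/0]_(s : S) (dvisit mu (det_policy astar) s / mu s).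

(* min_s mu(s)  (all mu s <= 1, so 1 is a neutral seed) *)
Definition min_mu (mu : S -> R) : R := \big[Num.min/1]_(s : S) mu s.

(* min_s pi_theta(a*(s) | s)  (probabilities are <= 1) *)
Definition min_opt_prob (theta : S -> A -> R) (astar : S -> A) : R :=
  \big[Num.min/1]_(s : S) softmax theta s (astar s).

End MDP.

Arguments det_policy {R S A} astar s a.

(* Only the sampled state s changes, so by the performance difference lemma the
   gain V^{θ'}(s0) - V^θ(s0) is the discounted occupancy of s times the mean
   advantage of the new policy over the old one at s. With p = π(a|s), δ = η A(s,a)/p
   the increment of θ(s,a) and y = p (exp δ - 1), this mean advantage is
   y A(s,a) / (1 + y), nonnegative because y, δ and A(s,a) share their sign; this is
   the monotonicity. For A(s,a) >= 0 we have y >= η A(s,a) and A(s,a) <= 1/(1-γ),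
   whence the bound η(1-γ) A(s,a)^2 / (1+η). Averaging over the sample, keeping only
   a = a⋆(s) and using d_μ >= (1-γ) μ bounds the expected gain below by
   min π(a⋆) · min μ · η(1-γ)/(1+η) · Σ_s d_μ(s) A⁺(s,a⋆)^2. On the other side
   (1-γ)(V⋆(μ) - V(μ)) = Σ_s d⋆(s) A(s,a⋆) <= Σ_s d⋆(s) A⁺(s,a⋆), and Cauchy–Schwarz
   with d⋆^2 <= d⋆ <= ‖d⋆/μ‖ μ <= ‖d⋆/μ‖ d_μ / (1-γ) bounds its square by the same
   weighted sum. *)

From Pilot Require Import Defs.
From HB Require Import structures.
From mathcomp Require Import all_boot all_order all_algebra.
From mathcomp Require Import all_classical all_reals all_analysis.
From mathcomp Require Import ring lra.
Import Order.TTheory GRing.Theory Num.Theory.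
Import numFieldNormedType.Exports.
Local Open Scope classical_set_scope.
Set Implicit Arguments. Unset Strict Implicit. Unset Printing Implicit Defensive.
Local Open Scope ring_scope.

Lemma sum_indicator_mul (R : pzSemiRingType) (I : finType) (j : I) (F : I -> R) :
  \sum_i (i == j)%:R * F i = F j.
Proof.
by rewrite (bigD1 j) //= eqxx mul1r big1 ?addr0 // => i /negPf ->; rewrite mul0r.
Qed.

Lemma sum_mul_indicator (R : pzSemiRingType) (I : finType) (j : I) (F : I -> R) :
  \sum_i F i * (j == i)%:R = F j.
Proof.
rewrite (bigD1 j) //= eqxx mulr1 big1 ?addr0 // => i.
by rewrite eq_sym => /negPf ->; rewrite mulr0.
Qed.

Lemma sqr_sum_le_card_mul (R : realFieldType) (I : finType) (x : I -> R) :
  (\sum_i x i) ^+ 2 <= #|I|%:R * \sum_i x i ^+ 2.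
Proof.
have : 0 <= \sum_(i : I) \sum_(j : I) (x i - x j) ^+ 2.
  by apply: sumr_ge0 => i _; apply: sumr_ge0 => j _; exact: sqr_ge0.
have -> : \sum_(i : I) \sum_(j : I) (x i - x j) ^+ 2 =
          \sum_(i : I) \sum_(j : I) x i ^+ 2 + \sum_(i : I) \sum_(j : I) x j ^+ 2
          - 2 * \sum_(i : I) \sum_(j : I) x i * x j.
  rewrite mulr_sumr -big_split -sumrB /=; apply: eq_bigr => i _.
  by rewrite mulr_sumr -big_split -sumrB /=; apply: eq_bigr => j _; ring.
have -> : \sum_(i : I) \sum_(j : I) x i * x j = (\sum_i x i) ^+ 2.
  by rewrite expr2 mulr_suml; apply: eq_bigr => i _; rewrite mulr_sumr.
rewrite sumr_const -mulr_natl; under eq_bigr do rewrite sumr_const -mulr_natl.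
rewrite -mulr_sumr; lra.
Qed.

Lemma cvg_sum (R : realType) (I : finType) (u : I -> nat -> R) (l : I -> R) :
  (forall i, u i n @[n --> \oo] --> l i) ->
  \sum_i u i n @[n --> \oo] --> \sum_i l i.
Proof. by move=> u_cvg; apply: cvg_big => //; exact: add_continuous. Qed.

Lemma det_policy_policy (R : realType) (S A : finType) (astar : S -> A) :
  is_policy (det_policy astar : S -> A -> R).
Proof.
split=> [s a|s]; first exact: ler0n.
rewrite -[RHS](sum_indicator_mul (astar s) (fun=> 1)).
by apply: eq_bigr => a _; rewrite mulr1.
Qed.

Lemma expR_sub1_mul_ge0 (R : realType) (d : R) : 0 <= (expR d - 1) * d.
Proof.
case: (lerP 0 d) => [d_ge0|d_lt0].
  by rewrite mulr_ge0 // subr_ge0 (le_trans _ (expR_ge1Dx d)) // lerDl.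
by rewrite mulr_le0 ?(ltW d_lt0) // subr_le0 -expR0 ler_expR ltW.
Qed.

Lemma one_add_mul_expR_sub1_gt0 (R : realType) (p d : R) :
  0 < p <= 1 -> 0 < 1 + p * (expR d - 1).
Proof. by case/andP=> p_gt0 p_le1; have := mulr_gt0 p_gt0 (expR_gt0 d); lra. Qed.

Section Softmax.
Variables (R : realType) (S A : finType) (a0 : A).
Implicit Type th : S -> A -> R.

Lemma sum_expR_gt0 th s : 0 < \sum_a expR (th s a).
Proof.
apply: lt_le_trans (expR_gt0 (th s a0)) _.
by rewrite (bigD1 a0) //= lerDl sumr_ge0 // => a _; exact: expR_ge0.
Qed.

Lemma softmax_gt0 th s a : 0 < softmax th s a.
Proof. by rewrite divr_gt0 ?expR_gt0 ?sum_expR_gt0. Qed.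

Lemma softmax_policy th : is_policy (softmax th).
Proof.
split=> [s a|s]; first exact/ltW/softmax_gt0.
by rewrite -mulr_suml mulfV // lt0r_neq0 ?sum_expR_gt0.
Qed.

Lemma softmax_le1 th s a : softmax th s a <= 1.
Proof.
case: (softmax_policy th) => _ /(_ s) <-; rewrite (bigD1 a) //= lerDl.
by apply: sumr_ge0 => b _; exact/ltW/softmax_gt0.
Qed.

Lemma softmax_bump th th' s a d :
  (forall b, th' s b = th s b + (b == a)%:R * d) ->
  forall b, softmax th' s b = softmax th s b * (1 + (b == a)%:R * (expR d - 1)) /
                              (1 + softmax th s a * (expR d - 1)).
Proof.
move=> th'E.
have expE b : expR (th' s b) = expR (th s b) * (1 + (b == a)%:R * (expR d - 1)).
  rewrite th'E expRD; case: eqP => _; last by rewrite !mul0r addr0 expR0 mulr1.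
  by rewrite !mul1r addrC subrK.
have Z_gt0 := sum_expR_gt0 th s.
have sumE : \sum_b expR (th' s b) =
            (\sum_b expR (th s b)) * (1 + softmax th s a * (expR d - 1)).
  under eq_bigr do rewrite expE mulrDr mulr1 mulrCA.
  rewrite big_split /= sum_indicator_mul [RHS]mulrDr mulr1 /softmax.
  by congr (_ + _); field; rewrite lt0r_neq0.
move=> b; rewrite {1}/softmax expE sumE /softmax invfM; ring.
Qed.

End Softmax.

Lemma min_opt_prob_ge0 (R : realType) (S A : finType) (th : S -> A -> R) astar :
  0 <= min_opt_prob th astar.
Proof.
apply: le_bigmin => [|s _]; first exact: ler01.
by rewrite divr_ge0 ?expR_ge0 // sumr_ge0 // => a _; exact: expR_ge0.
Qed.

Lemma min_opt_prob_le1 (R : realType) (S A : finType) (th : S -> A -> R) astar :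
  min_opt_prob th astar <= 1.
Proof. exact: bigmin_le_id. Qed.

Lemma min_mu_ge0 (R : realType) (S : finType) (mu : S -> R) :
  (forall s, 0 <= mu s) -> 0 <= min_mu mu.
Proof. by move=> mu_ge0; apply: le_bigmin => [|s _]; [exact: ler01 | exact: mu_ge0]. Qed.

Lemma dist_mismatch_ge0 (R : realType) (S A : finType) (P : S -> A -> S -> R) g mu
  (astar : S -> A) : 0 <= dist_mismatch P g mu astar.
Proof. exact: bigmax_ge_id. Qed.

(* y/(1+y) >= η adv/(1 + η adv) >= η k adv/(1+η), the latter as k (1 + η adv) <= 1 + η. *)
Lemma npg_gain_lb (R : realFieldType) (k eta adv y : R) :
  0 < k <= 1 -> 0 < eta -> 0 <= adv -> k * adv <= 1 -> eta * adv <= y ->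
  eta * k * adv ^+ 2 / (1 + eta) <= y * adv / (1 + y).
Proof.
case/andP=> k_gt0 k_le1 eta_gt0 adv_ge0 k_adv_le1 y_ge.
have y_ge0 : 0 <= y by apply: le_trans y_ge; rewrite mulr_ge0 // ltW.
have [eta1_gt0 y1_gt0] : 0 < 1 + eta /\ 0 < 1 + y by split; lra.
rewrite ler_pdivlMr // mulrAC ler_pdivrMr //.
have h1 : 0 <= adv * (y - eta * adv) * (1 + eta - eta * k * adv).
  by rewrite !mulr_ge0 ?subr_ge0 //; nra.
have h2 : 0 <= eta * adv ^+ 2 * (1 - k).
  by rewrite mulr_ge0 ?subr_ge0 // mulr_ge0 ?sqr_ge0 // ltW.
have h3 : 0 <= eta ^+ 2 * adv ^+ 2 * (1 - k * adv).
  by rewrite mulr_ge0 ?subr_ge0 // mulr_ge0 ?sqr_ge0.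
nra.
Qed.

Section MarkovChain.
Variables (R : realType) (S A : finType) (P : S -> A -> S -> R).

Local Notation sp := (state_prob P).

Definition kernel (pol : S -> A -> R) (s s' : S) : R := \sum_a pol s a * P s a s'.

Lemma state_probS pol s0 t s' :
  sp pol s0 t.+1 s' = \sum_s sp pol s0 t s * kernel pol s s'.
Proof.
by apply: eq_bigr => s _; rewrite mulr_sumr; apply: eq_bigr => a _; rewrite mulrA.
Qed.

Lemma state_probSr pol t s0 s :
  sp pol s0 t.+1 s = \sum_s1 kernel pol s0 s1 * sp pol s1 t s.
Proof.
elim: t s => [|t IH] s; first by rewrite state_probS sum_indicator_mul sum_mul_indicator.
rewrite state_probS; under eq_bigr do rewrite IH mulr_suml.
rewrite exchange_big; apply: eq_bigr => s1 _.
by rewrite state_probS mulr_sumr; apply: eq_bigr => s' _; rewrite mulrA.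
Qed.

Lemma sum_kernel_mul pol s0 (v : S -> S -> R) (f : S -> R) :
  \sum_s (\sum_s1 kernel pol s0 s1 * v s1 s) * f s =
  \sum_s1 kernel pol s0 s1 * \sum_s v s1 s * f s.
Proof.
under eq_bigr do rewrite mulr_suml.
rewrite exchange_big; apply: eq_bigr => s1 _.
by rewrite mulr_sumr; apply: eq_bigr => s _; rewrite mulrA.
Qed.

Lemma sum_state_probSr pol t s0 (f : S -> R) :
  \sum_s sp pol s0 t.+1 s * f s = \sum_s1 kernel pol s0 s1 * \sum_s sp pol s1 t s * f s.
Proof. by under eq_bigr do rewrite state_probSr; exact: sum_kernel_mul. Qed.

Hypothesis P_ge0 : forall s a s', 0 <= P s a s'.
Hypothesis P_sum1 : forall s a, \sum_s' P s a s' = 1.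

Section Policy.
Variable pol : S -> A -> R.
Hypothesis pol_policy : is_policy pol.

Lemma kernel_ge0 s s' : 0 <= kernel pol s s'.
Proof. by case: pol_policy => pol_ge0 _; apply: sumr_ge0 => a _; rewrite mulr_ge0. Qed.

Lemma kernel_sum1 s : \sum_s' kernel pol s s' = 1.
Proof.
case: pol_policy => _ pol_sum1; rewrite exchange_big -[RHS](pol_sum1 s).
by apply: eq_bigr => a _; rewrite -mulr_sumr P_sum1 mulr1.
Qed.

Lemma state_prob_ge0 s0 t s : 0 <= sp pol s0 t s.
Proof.
elim: t s => [|t IH] s; first exact: ler0n.
by rewrite state_probS; apply: sumr_ge0 => s1 _; rewrite mulr_ge0 ?kernel_ge0.
Qed.

Lemma state_prob_sum1 s0 t : \sum_s sp pol s0 t s = 1.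
Proof.
elim: t => [|t IH]; first by rewrite /= (bigD1 s0) //= eqxx big1 ?addr0 // => s /negPf ->.
under eq_bigr do rewrite state_probS.
rewrite exchange_big -[RHS]IH; apply: eq_bigr => s _.
by rewrite -mulr_sumr kernel_sum1 mulr1.
Qed.

Lemma state_prob_le1 s0 t s : sp pol s0 t s <= 1.
Proof.
rewrite -(state_prob_sum1 s0 t) (bigD1 s) //= lerDl.
by apply: sumr_ge0 => *; exact: state_prob_ge0.
Qed.

End Policy.

Section Occupancy.
Variable g : R.
Hypotheses (g_ge0 : 0 <= g) (g_lt1 : g < 1).

Definition occupancy_partial pol s0 s n := \sum_(0 <= t < n) g ^+ t * sp pol s0 t s.

Definition occupancy pol s0 s := limn (occupancy_partial pol s0 s).

Lemma one_sub_g_gt0 : 0 < 1 - g. Proof. by rewrite subr_gt0. Qed.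

Lemma geometric_sum_le n : \sum_(0 <= t < n) g ^+ t <= (1 - g)^-1.
Proof.
have := congr1 (fun u => u n) (@geometric_seriesE _ 1 g (negbT (lt_eqF g_lt1))).
rewrite /series /= => geomE; under eq_bigr do rewrite -(mul1r (g ^+ _)).
rewrite geomE mul1r ler_piMl ?invr_ge0 ?subr_ge0 ?(ltW g_lt1) //.
by rewrite gerBl exprn_ge0.
Qed.

Lemma occupancy_partialSr pol s0 s n :
  occupancy_partial pol s0 s n.+1 =
  (s == s0)%:R + g * \sum_s1 kernel pol s0 s1 * occupancy_partial pol s1 s n.
Proof.
rewrite /occupancy_partial big_nat_recl // expr0 mul1r; congr (_ + _).
under eq_bigr do rewrite state_probSr mulr_sumr.
rewrite exchange_big mulr_sumr; apply: eq_bigr => s1 _.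
rewrite !mulr_sumr; apply: eq_bigr => t _; rewrite exprS; ring.
Qed.

Lemma sum_occupancy_partialSr pol s0 n (f : S -> R) :
  \sum_s occupancy_partial pol s0 s n.+1 * f s =
  f s0 + g * \sum_s1 kernel pol s0 s1 * \sum_s occupancy_partial pol s1 s n * f s.
Proof.
under eq_bigr do rewrite occupancy_partialSr mulrDl -mulrA.
by rewrite big_split sum_indicator_mul -mulr_sumr sum_kernel_mul.
Qed.

Section Policy.
Variable pol : S -> A -> R.
Hypothesis pol_policy : is_policy pol.

Lemma occupancy_partial_nondecreasing s0 s :
  nondecreasing_seq (occupancy_partial pol s0 s).
Proof.
apply/nondecreasing_seqP => n; rewrite /occupancy_partial big_nat_recr //= lerDl.
by rewrite mulr_ge0 ?exprn_ge0 ?state_prob_ge0.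
Qed.

Lemma occupancy_partial_le s0 s n : occupancy_partial pol s0 s n <= (1 - g)^-1.
Proof.
apply: le_trans (geometric_sum_le n); apply: ler_sum => t _.
by rewrite ler_piMr ?exprn_ge0 ?state_prob_le1.
Qed.

Lemma occupancy_partial_cvg s0 s :
  occupancy_partial pol s0 s n @[n --> \oo] --> occupancy pol s0 s.
Proof.
apply: nondecreasing_is_cvgn; first exact: occupancy_partial_nondecreasing.
by exists (1 - g)^-1 => _ [n _ <-]; exact: occupancy_partial_le.
Qed.

Lemma occupancy_partial_le_lim s0 s n :
  occupancy_partial pol s0 s n <= occupancy pol s0 s.
Proof.
apply: nondecreasing_cvgn_le; first exact: occupancy_partial_nondecreasing.
exact: occupancy_partial_cvg.
Qed.

Lemma occupancy_ge0 s0 s : 0 <= occupancy pol s0 s.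
Proof.
by apply: le_trans (occupancy_partial_le_lim s0 s 0); rewrite /occupancy_partial big_geq.
Qed.

Lemma occupancy_diag_ge1 s : 1 <= occupancy pol s s.
Proof.
apply: le_trans (occupancy_partial_le_lim s s 1).
by rewrite /occupancy_partial big_nat1 expr0 mul1r /= eqxx.
Qed.

Lemma occupancySr s0 s :
  occupancy pol s0 s = (s == s0)%:R + g * \sum_s1 kernel pol s0 s1 * occupancy pol s1 s.
Proof.
have shifted : occupancy_partial pol s0 s n.+1 @[n --> \oo] --> occupancy pol s0 s.
  by rewrite (cvg_shiftS (occupancy_partial pol s0 s)); exact: occupancy_partial_cvg.
apply: (cvg_unique (@Rhausdorff R) shifted) => /=.
under eq_cvg do rewrite occupancy_partialSr.
apply: cvgD; first exact: cvg_cst.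
apply: cvgMl_tmp; apply: cvg_sum => s1; apply: cvgMl_tmp.
exact: occupancy_partial_cvg.
Qed.

Lemma sum_occupancySr s0 (f : S -> R) :
  \sum_s occupancy pol s0 s * f s =
  f s0 + g * \sum_s1 kernel pol s0 s1 * \sum_s occupancy pol s1 s * f s.
Proof.
under eq_bigr do rewrite occupancySr mulrDl -mulrA.
by rewrite big_split sum_indicator_mul -mulr_sumr sum_kernel_mul.
Qed.

Lemma occupancy_partial_cvg_sum (c : S -> R) s0 :
  \sum_s occupancy_partial pol s0 s n * c s @[n --> \oo] -->
  \sum_s occupancy pol s0 s * c s.
Proof. by apply: cvg_sum => s; apply: cvgMr_tmp; exact: occupancy_partial_cvg. Qed.

Lemma discounted_tail_cvg0 (f : S -> R) s0 :
  g ^+ n * \sum_s sp pol s0 n s * f s @[n --> \oo] --> 0.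
Proof.
have term0 s : g ^+ n * sp pol s0 n s @[n --> \oo] --> 0.
  apply: (@squeeze_cvgr _ _ _ _ (fun=> 0) (fun n => g ^+ n)); last 2 first.
  - exact: cvg_cst.
  - by apply: cvg_expr; rewrite ger0_norm.
  apply: nearW => n; rewrite mulr_ge0 ?exprn_ge0 ?state_prob_ge0 //=.
  by rewrite ler_piMr ?exprn_ge0 ?state_prob_le1.
have -> : (fun n => g ^+ n * \sum_s sp pol s0 n s * f s) =
          (fun n => \sum_s g ^+ n * sp pol s0 n s * f s).
  by apply/funext => n; rewrite mulr_sumr; apply: eq_bigr => s _; rewrite mulrA.
have : \sum_s g ^+ n * sp pol s0 n s * f s @[n --> \oo] --> \sum_s 0 * f s.
  by apply: cvg_sum => s; apply: cvgMr_tmp; exact: term0.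
by rewrite (_ : \sum_s 0 * f s = 0) // big1 // => s _; rewrite mul0r.
Qed.

Section FixedPoint.
Variables c W : S -> R.
Hypothesis W_fix : forall s, W s = c s + g * \sum_s' kernel pol s s' * W s'.

Lemma fixpoint_unfold n s0 :
  W s0 = \sum_s occupancy_partial pol s0 s n * c s +
         g ^+ n * \sum_s sp pol s0 n s * W s.
Proof.
elim: n s0 => [|n IH] s0.
  rewrite big1 ?add0r => [|s _]; last by rewrite /occupancy_partial big_geq ?mul0r.
  by rewrite expr0 mul1r /= sum_indicator_mul.
rewrite W_fix sum_occupancy_partialSr sum_state_probSr -addrA; congr (_ + _).
under eq_bigr do rewrite IH mulrDr.
rewrite big_split mulrDr exprS -mulrA; congr (_ + _).
by congr (_ * _); rewrite mulr_sumr; apply: eq_bigr => s1 _; rewrite mulrCA.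
Qed.

Lemma fixpoint_occupancy s0 : W s0 = \sum_s occupancy pol s0 s * c s.
Proof.
have unfoldE : (fun n => \sum_s occupancy_partial pol s0 s n * c s) =
               (fun n => W s0 - g ^+ n * \sum_s sp pol s0 n s * W s).
  by apply/funext => n; rewrite [in RHS](fixpoint_unfold n s0) addrK.
have : \sum_s occupancy_partial pol s0 s n * c s @[n --> \oo] --> W s0.
  rewrite unfoldE -[X in _ --> X]subr0; apply: cvgB; first exact: cvg_cst.
  exact: discounted_tail_cvg0.
by move/cvg_unique; apply=> //; exact: occupancy_partial_cvg_sum.
Qed.

End FixedPoint.

Lemma occupancy_sum s0 : \sum_s occupancy pol s0 s = (1 - g)^-1.
Proof.
rewrite [RHS](@fixpoint_occupancy (fun=> 1) (fun=> (1 - g)^-1) _ s0) => [|s].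
  by apply: eq_bigr => s _; rewrite mulr1.
rewrite -mulr_suml kernel_sum1 // mul1r.
by field; rewrite lt0r_neq0 ?one_sub_g_gt0.
Qed.

Section InitialDistribution.
Variable mu : S -> R.

Lemma dvisitE s : dvisit P g mu pol s = \sum_s0 mu s0 * ((1 - g) * occupancy pol s0 s).
Proof. by []. Qed.

Hypothesis mu_ge0 : forall s, 0 <= mu s.

Lemma dvisit_ge s : (1 - g) * mu s <= dvisit P g mu pol s.
Proof.
rewrite dvisitE (bigD1 s) //= -[leLHS]addr0 lerD //.
  rewrite mulrC ler_wpM2l // ler_peMr ?occupancy_diag_ge1 //.
  exact: ltW one_sub_g_gt0.
apply: sumr_ge0 => s0 _; rewrite !mulr_ge0 ?occupancy_ge0 //.
exact: ltW one_sub_g_gt0.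
Qed.

Lemma dvisit_ge0 s : 0 <= dvisit P g mu pol s.
Proof. by apply: le_trans (dvisit_ge s); rewrite mulr_ge0 // ltW ?one_sub_g_gt0. Qed.

Lemma dvisit_sum1 : \sum_s mu s = 1 -> \sum_s dvisit P g mu pol s = 1.
Proof.
move=> mu_sum1; under eq_bigr do rewrite dvisitE.
rewrite exchange_big -[RHS]mu_sum1; apply: eq_bigr => s0 _.
rewrite -!mulr_sumr occupancy_sum mulfV ?mulr1 //.
by rewrite lt0r_neq0 ?one_sub_g_gt0.
Qed.

End InitialDistribution.
End Policy.

Section Values.
Variable r : S -> A -> R.
Hypothesis r_ge0 : forall s a, 0 <= r s a.
Hypothesis r_le1 : forall s a, r s a <= 1.

Local Notation V := (V r P g).
Local Notation Q := (Q r P g).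

Definition expected_reward pol s := \sum_a pol s a * r s a.

Definition advantage pol s a := Q pol s a - V pol s.

Definition mean_advantage pol' pol s := \sum_a pol' s a * Q pol s a - V pol s.

Lemma sum_Q pol' pol s :
  \sum_a pol' s a * Q pol s a =
  expected_reward pol' s + g * \sum_s' kernel pol' s s' * V pol s'.
Proof.
rewrite /Q /kernel; under eq_bigr do rewrite mulrDr.
rewrite big_split /=; congr (_ + _).
under eq_bigr do rewrite mulrCA.
rewrite -mulr_sumr; congr (_ * _); under [in RHS]eq_bigr do rewrite mulr_suml.
rewrite [RHS]exchange_big; apply: eq_bigr => a _.
by rewrite mulr_sumr; apply: eq_bigr => s' _; rewrite mulrA.
Qed.

Section Policy.
Variable pol : S -> A -> R.
Hypothesis pol_policy : is_policy pol.

Lemma expected_reward_ge0 s : 0 <= expected_reward pol s.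
Proof. by case: pol_policy => pol_ge0 _; apply: sumr_ge0 => a _; rewrite mulr_ge0. Qed.

Lemma expected_reward_le1 s : expected_reward pol s <= 1.
Proof.
case: pol_policy => pol_ge0 pol_sum1; rewrite -(pol_sum1 s).
by apply: ler_sum => a _; rewrite ler_piMr.
Qed.

Lemma V_occupancy s0 : V pol s0 = \sum_s occupancy pol s0 s * expected_reward pol s.
Proof.
have seqE : (fun n => \sum_(0 <= t < n) g ^+ t *
                \sum_s \sum_a state_prob P pol s0 t s * pol s a * r s a) =
            (fun n => \sum_s occupancy_partial pol s0 s n * expected_reward pol s).
  apply/funext => n; under [RHS]eq_bigr do rewrite mulr_suml.
  rewrite exchange_big; apply: eq_bigr => t _; rewrite mulr_sumr.
  apply: eq_bigr => s _; rewrite -mulrA; congr (_ * _).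
  by rewrite /expected_reward mulr_sumr; apply: eq_bigr => a _; rewrite mulrA.
by rewrite /Defs.V seqE; apply: cvg_lim => //; exact: occupancy_partial_cvg_sum.
Qed.

Lemma V_bellman s :
  V pol s = expected_reward pol s + g * \sum_s' kernel pol s s' * V pol s'.
Proof.
rewrite V_occupancy sum_occupancySr //; congr (_ + _ * _).
by apply: eq_bigr => s' _; rewrite V_occupancy.
Qed.

Lemma V_sum_Q s : V pol s = \sum_a pol s a * Q pol s a.
Proof. by rewrite sum_Q V_bellman. Qed.

Lemma mean_advantage_self s : mean_advantage pol pol s = 0.
Proof. by rewrite /mean_advantage -V_sum_Q subrr. Qed.

Lemma V_ge0 s : 0 <= V pol s.
Proof.
rewrite V_occupancy; apply: sumr_ge0 => s' _.
by rewrite mulr_ge0 ?occupancy_ge0 ?expected_reward_ge0.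
Qed.

Lemma V_le s : V pol s <= (1 - g)^-1.
Proof.
rewrite V_occupancy -(occupancy_sum pol_policy s); apply: ler_sum => s' _.
by rewrite ler_piMr ?occupancy_ge0 ?expected_reward_le1.
Qed.

Lemma Q_le s a : Q pol s a <= (1 - g)^-1.
Proof.
have PV_le : \sum_s' P s a s' * V pol s' <= (1 - g)^-1.
  rewrite -[leRHS]mul1r -{1}(P_sum1 s a) mulr_suml.
  by apply: ler_sum => s' _; rewrite ler_wpM2l ?V_le.
have -> : (1 - g)^-1 = 1 + g * (1 - g)^-1.
  by field; rewrite lt0r_neq0 ?one_sub_g_gt0.
by rewrite /Defs.Q lerD ?ler_wpM2l.
Qed.

Lemma mean_advantage_bump pol' s a x :
  (forall b, pol' s b = pol s b * (1 + (b == a)%:R * x) / (1 + pol s a * x)) ->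
  1 + pol s a * x != 0 ->
  mean_advantage pol' pol s = pol s a * x * advantage pol s a / (1 + pol s a * x).
Proof.
move=> pol'E N_neq0; rewrite /mean_advantage /advantage.
have termE b : pol' s b * Q pol s b =
    (pol s b * Q pol s b + (b == a)%:R * (pol s a * x * Q pol s a)) / (1 + pol s a * x).
  by rewrite pol'E; case: eqP => [->|_]; rewrite ?mul1r ?mul0r; ring.
under eq_bigr do rewrite termE.
rewrite -mulr_suml big_split /= -V_sum_Q.
by rewrite sum_indicator_mul; field.
Qed.

End Policy.

Lemma mean_advantage_det pol astar s :
  is_policy pol -> mean_advantage (det_policy astar) pol s = advantage pol s (astar s).
Proof. by rewrite /mean_advantage sum_indicator_mul. Qed.

Lemma performance_difference pol pol' : is_policy pol -> is_policy pol' ->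
  forall s0, V pol' s0 - V pol s0 =
  \sum_s occupancy pol' s0 s * mean_advantage pol' pol s.
Proof.
move=> pol_policy pol'_policy; apply: fixpoint_occupancy => // s.
rewrite /mean_advantage sum_Q (V_bellman pol'_policy s).
have -> : \sum_s' kernel pol' s s' * (V pol' s' - V pol s') =
          \sum_s' kernel pol' s s' * V pol' s' - \sum_s' kernel pol' s s' * V pol s'.
  by rewrite -sumrB; apply: eq_bigr => s' _; rewrite mulrBr.
ring.
Qed.

Lemma Vmu_sub mu pol pol' : is_policy pol -> is_policy pol' ->
  Vmu r P g mu pol' - Vmu r P g mu pol =
  (1 - g)^-1 * \sum_s dvisit P g mu pol' s * mean_advantage pol' pol s.
Proof.
move=> pol_policy pol'_policy; rewrite /Vmu -sumrB.
under eq_bigr do rewrite -mulrBr (performance_difference pol_policy pol'_policy) mulr_sumr.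
rewrite exchange_big mulr_sumr; apply: eq_bigr => s _.
rewrite dvisitE !mulr_suml mulr_sumr; apply: eq_bigr => s0 _.
by field; rewrite lt0r_neq0 ?one_sub_g_gt0.
Qed.

Section NaturalPolicyGradient.
Variables (a0 : A) (eta : R).
Hypothesis eta_gt0 : 0 < eta.

Definition npg_step th s a := eta * advantage (softmax th) s a / softmax th s a.

Lemma npg_update_row th s a b :
  npg_update r P g eta th s a s b = th s b + (b == a)%:R * npg_step th s a.
Proof.
rewrite /npg_update eqxx /=.
by case: eqP => [->|_]; rewrite ?mul1r // mul0r addr0.
Qed.

Lemma softmax_npg_update_neq th s a s' :
  s' != s -> softmax (npg_update r P g eta th s a) s' = softmax th s'.
Proof. by move=> s's; apply/funext => b; rewrite /softmax /npg_update (negPf s's). Qed.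

Lemma mean_advantage_npg th s a :
  mean_advantage (softmax (npg_update r P g eta th s a)) (softmax th) s =
  softmax th s a * (expR (npg_step th s a) - 1) * advantage (softmax th) s a /
  (1 + softmax th s a * (expR (npg_step th s a) - 1)).
Proof.
apply: mean_advantage_bump; first exact: softmax_policy.
  exact/softmax_bump/npg_update_row.
by rewrite lt0r_neq0 // one_add_mul_expR_sub1_gt0 // softmax_gt0 // softmax_le1.
Qed.

Lemma mean_advantage_npg_ge0 th s a s' :
  0 <= mean_advantage (softmax (npg_update r P g eta th s a)) (softmax th) s'.
Proof.
have [->|s's] := eqVneq s' s; last first.
  rewrite /mean_advantage softmax_npg_update_neq // -/(mean_advantage _ _ _).
  by rewrite (mean_advantage_self (softmax_policy a0 th)).
rewrite mean_advantage_npg; set p := softmax th s a; set d := npg_step th s a.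
have p_gt0 : 0 < p := softmax_gt0 a0 th s a.
have gainE : p * (expR d - 1) * advantage (softmax th) s a =
             p ^+ 2 / eta * ((expR d - 1) * d).
  by rewrite /d /npg_step -/p; field; rewrite !lt0r_neq0.
rewrite gainE divr_ge0 //; last first.
  by apply/ltW/one_add_mul_expR_sub1_gt0; rewrite p_gt0 softmax_le1.
by rewrite mulr_ge0 ?expR_sub1_mul_ge0 // divr_ge0 ?sqr_ge0 // ltW.
Qed.

Lemma V_npg_update_ge th s a s0 :
  V (softmax th) s0 <= V (softmax (npg_update r P g eta th s a)) s0.
Proof.
rewrite -subr_ge0 (performance_difference (softmax_policy a0 _) (softmax_policy a0 _)).
apply: sumr_ge0 => s' _; apply: mulr_ge0; last exact: mean_advantage_npg_ge0.
exact/occupancy_ge0/softmax_policy.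
Qed.

Lemma mean_advantage_npg_lb th s a : 0 <= advantage (softmax th) s a ->
  eta * (1 - g) * advantage (softmax th) s a ^+ 2 / (1 + eta) <=
  mean_advantage (softmax (npg_update r P g eta th s a)) (softmax th) s.
Proof.
move=> adv_ge0; rewrite mean_advantage_npg.
set p := softmax th s a; set d := npg_step th s a; set adv := advantage _ s a.
have p_gt0 : 0 < p := softmax_gt0 a0 th s a.
have pi_policy := softmax_policy a0 th.
apply: npg_gain_lb => //.
- by rewrite one_sub_g_gt0 gerBl.
- rewrite -ler_pdivlMl ?one_sub_g_gt0 // mulr1 /adv /advantage lerBlDr.
  by rewrite (le_trans (Q_le pi_policy s a)) // lerDl V_ge0.
- have -> : eta * adv = p * d by rewrite /d /npg_step -/p -/adv; field; rewrite lt0r_neq0.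
  by rewrite ler_wpM2l ?(ltW p_gt0) // lerBrDl expR_ge1Dx.
Qed.

Section ExpectedImprovement.
Variables (mu : S -> R) (astar : S -> A) (th : S -> A -> R).
Hypotheses (mu_gt0 : forall s, 0 < mu s) (mu_sum1 : \sum_s mu s = 1).
Hypothesis astar_opt :
  forall pol, is_policy pol -> forall s, V pol s <= V (det_policy astar) s.

Local Notation Vmu := (Vmu r P g mu).
Local Notation d := (dvisit P g mu).
Local Notation pi := (softmax th).
Local Notation next s a := (softmax (npg_update r P g eta th s a)).
Local Notation pistar := (det_policy astar).
Local Notation adv_plus s := (Num.max (advantage pi s (astar s)) 0).

Let mu_ge0 s : 0 <= mu s := ltW (mu_gt0 s).
Let pi_policy : is_policy pi := softmax_policy a0 th.
Let next_policy s a : is_policy (next s a) := softmax_policy a0 _.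
Let pistar_policy : is_policy pistar := det_policy_policy R astar.

Lemma expected_next_Vmu_sub :
  expected_next_Vmu r P g mu eta th - Vmu pi =
  \sum_s \sum_a d pi s * pi s a * (Vmu (next s a) - Vmu pi).
Proof.
have VmuE : Vmu pi = \sum_s \sum_a d pi s * pi s a * Vmu pi.
  rewrite -[LHS]mul1r -(dvisit_sum1 pi_policy mu_sum1) mulr_suml.
  apply: eq_bigr => s _; rewrite -mulr_suml -mulr_sumr.
  by case: pi_policy => _ ->; rewrite mulr1.
rewrite {1}VmuE -sumrB; apply: eq_bigr => s _.
by rewrite -sumrB; apply: eq_bigr => a _; rewrite mulrBr.
Qed.

Lemma Vmu_npg_update_ge s a :
  mu s * mean_advantage (next s a) pi s <= Vmu (next s a) - Vmu pi.
Proof.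
rewrite (Vmu_sub _ pi_policy (next_policy s a)) (bigD1 s) // [leRHS]mulrDr.
rewrite -[leLHS]addr0 lerD //; last first.
  rewrite mulr_ge0 ?invr_ge0 ?(ltW one_sub_g_gt0) // sumr_ge0 // => s' _.
  by rewrite mulr_ge0 ?mean_advantage_npg_ge0 ?(dvisit_ge0 (next_policy s a)).
rewrite mulrA ler_wpM2r ?mean_advantage_npg_ge0 //.
by rewrite ler_pdivlMl ?one_sub_g_gt0 ?(dvisit_ge (next_policy s a)).
Qed.

Lemma expected_improvement_ge :
  \sum_s d pi s * pi s (astar s) * (mu s * mean_advantage (next s (astar s)) pi s) <=
  expected_next_Vmu r P g mu eta th - Vmu pi.
Proof.
rewrite expected_next_Vmu_sub; apply: ler_sum => s _.
have dpi_ge0 a : 0 <= d pi s * pi s a.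
  by rewrite mulr_ge0 ?dvisit_ge0 ?(ltW (softmax_gt0 a0 _ _ _)).
rewrite (bigD1 (astar s)) //= -[leLHS]addr0 lerD ?ler_wpM2l ?Vmu_npg_update_ge //.
apply: sumr_ge0 => a _; rewrite mulr_ge0 //.
by rewrite (le_trans _ (Vmu_npg_update_ge s a)) ?mulr_ge0 ?mean_advantage_npg_ge0.
Qed.

Lemma mean_advantage_npg_astar_ge s :
  eta * (1 - g) / (1 + eta) * adv_plus s ^+ 2 <= mean_advantage (next s (astar s)) pi s.
Proof.
have [adv_ge0|adv_lt0] := lerP 0 (advantage pi s (astar s)).
  by rewrite mulrAC mean_advantage_npg_lb.
by rewrite expr0n mulr0 mean_advantage_npg_ge0.
Qed.

Lemma Vmu_det_sub :
  Vmu pistar - Vmu pi = (1 - g)^-1 * \sum_s d pistar s * advantage pi s (astar s).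
Proof.
rewrite (Vmu_sub _ pi_policy pistar_policy); congr (_ * _).
by apply: eq_bigr => s _; rewrite mean_advantage_det.
Qed.

Lemma dvisit_det_le s : d pistar s <= dist_mismatch P g mu astar * mu s.
Proof. by rewrite -ler_pdivrMr //; exact: le_bigmax. Qed.

Lemma suboptimality_sq_le :
  (1 - g) ^+ 3 * (Vmu pistar - Vmu pi) ^+ 2 <=
  #|S|%:R * dist_mismatch P g mu astar * \sum_s d pi s * adv_plus s ^+ 2.
Proof.
set G := Vmu pistar - Vmu pi; set dm := dist_mismatch P g mu astar.
set X := \sum_s d pi s * adv_plus s ^+ 2.
have k_gt0 := one_sub_g_gt0.
have G_ge0 : 0 <= G.
  rewrite /G /Defs.Vmu -sumrB; apply: sumr_ge0 => s _.
  by rewrite -mulrBr mulr_ge0 // subr_ge0 astar_opt.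
have G_le : (1 - g) * G <= \sum_s d pistar s * adv_plus s.
  rewrite /G Vmu_det_sub mulrA mulfV ?lt0r_neq0 // mul1r.
  by apply: ler_sum => s _; rewrite ler_wpM2l ?dvisit_ge0 // le_max lexx.
have dstar_sq_le s : d pistar s ^+ 2 <= dm * (1 - g)^-1 * d pi s.
  have dstar_le1 : d pistar s <= 1.
    rewrite -(dvisit_sum1 pistar_policy mu_sum1) (bigD1 s) //= lerDl.
    by apply: sumr_ge0 => s' _; exact: dvisit_ge0.
  rewrite expr2 (le_trans (ler_piMl (dvisit_ge0 pistar_policy mu_ge0 s) dstar_le1)) //.
  rewrite (le_trans (dvisit_det_le s)) // -mulrA.
  rewrite ler_wpM2l ?bigmax_ge_id // ler_pdivlMl //.
  exact: dvisit_ge.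
have sq_le : ((1 - g) * G) ^+ 2 <= #|S|%:R * (dm * (1 - g)^-1 * X).
  apply: (@le_trans _ _ ((\sum_s d pistar s * adv_plus s) ^+ 2)).
    rewrite ler_sqr ?nnegrE ?mulr_ge0 ?(ltW k_gt0) // sumr_ge0 // => s _.
    by rewrite mulr_ge0 ?(dvisit_ge0 pistar_policy) // le_max lexx orbT.
  apply: (le_trans (sqr_sum_le_card_mul _)); rewrite ler_wpM2l // mulr_sumr.
  apply: ler_sum => s _; rewrite exprMn mulrA ler_wpM2r //; exact: sqr_ge0.
rewrite [leLHS](_ : _ = (1 - g) * ((1 - g) * G) ^+ 2); last by ring.
rewrite [leRHS](_ : _ = (1 - g) * (#|S|%:R * (dm * (1 - g)^-1 * X))); last first.
  by field; rewrite lt0r_neq0.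
exact: ler_wpM2l (ltW k_gt0) _ _ sq_le.
Qed.

Lemma expected_improvement_ge_gap :
  min_opt_prob th astar * min_mu mu * (eta * (1 - g) / (1 + eta)) *
    \sum_s d pi s * adv_plus s ^+ 2
  <= expected_next_Vmu r P g mu eta th - Vmu pi.
Proof.
set K := eta * (1 - g) / (1 + eta).
have K_ge0 : 0 <= K.
  apply: divr_ge0; first exact: mulr_ge0 (ltW eta_gt0) (ltW one_sub_g_gt0).
  exact: addr_ge0 ler01 (ltW eta_gt0).
apply: le_trans expected_improvement_ge; rewrite mulr_sumr; apply: ler_sum => s _.
rewrite [leLHS](_ : _ = d pi s *
  (min_opt_prob th astar * (min_mu mu * (K * adv_plus s ^+ 2)))); last by ring.
rewrite -mulrA ler_wpM2l ?(dvisit_ge0 pi_policy) //.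
apply: ler_pM; [exact: min_opt_prob_ge0 | | exact: bigmin_le |].
  by rewrite mulr_ge0 ?min_mu_ge0 // mulr_ge0 ?sqr_ge0.
apply: ler_pM; [exact: min_mu_ge0 | | exact: bigmin_le |].
  by rewrite mulr_ge0 ?sqr_ge0.
exact: mean_advantage_npg_astar_ge.
Qed.

Lemma expected_improvement_lb :
  eta * (1 - g) ^+ 4 * min_mu mu / (1 + eta) * (dist_mismatch P g mu astar)^-1
    * (min_opt_prob th astar ^+ 2 / #|S|%:R) * (Vmu pistar - Vmu pi) ^+ 2
  <= expected_next_Vmu r P g mu eta th - Vmu pi.
Proof.
set K := eta * (1 - g) / (1 + eta); set pmin := min_opt_prob th astar.
set mmin := min_mu mu; set dm := dist_mismatch P g mu astar.
set G := Vmu pistar - Vmu pi; set X := \sum_s d pi s * adv_plus s ^+ 2.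
have KM_ge0 : 0 <= K * mmin.
  rewrite mulr_ge0 ?min_mu_ge0 // divr_ge0 ?mulr_ge0 ?(ltW eta_gt0) ?(ltW one_sub_g_gt0) //.
  exact: addr_ge0 ler01 (ltW eta_gt0).
have ratio_le : (1 - g) ^+ 3 * G ^+ 2 / (dm * #|S|%:R) <= X.
  (* [x / 0 = 0] makes the degenerate case trivial. *)
  have [->|dmS_neq0] := eqVneq (dm * #|S|%:R) 0.
    rewrite invr0 mulr0 sumr_ge0 // => s _.
    by rewrite mulr_ge0 ?sqr_ge0 ?(dvisit_ge0 pi_policy).
  rewrite ler_pdivrMr ?lt0r ?dmS_neq0 ?mulr_ge0 ?dist_mismatch_ge0 //.
  by rewrite [leRHS]mulrC [dm * _]mulrC; exact: suboptimality_sq_le.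
rewrite [leLHS](_ : _ = K * mmin * pmin ^+ 2 * ((1 - g) ^+ 3 * G ^+ 2 / (dm * #|S|%:R)));
  last by rewrite invfM /K; ring.
apply: le_trans expected_improvement_ge_gap; rewrite -/pmin -/mmin -/K -/X.
rewrite [leRHS](_ : _ = K * mmin * pmin * X); last by ring.
apply: ler_pM => //.
- by rewrite mulr_ge0 ?sqr_ge0.
- apply: divr_ge0; last by rewrite mulr_ge0 ?dist_mismatch_ge0.
  exact: mulr_ge0 (exprn_ge0 _ (ltW one_sub_g_gt0)) (sqr_ge0 _).
- by rewrite ler_wpM2l // expr2 ler_piMl ?min_opt_prob_ge0 ?min_opt_prob_le1.
Qed.

End ExpectedImprovement.

End NaturalPolicyGradient.

End Values.
End Occupancy.
End MarkovChain.

Theorem lemma3 (R : realType) (S A : finType)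
  (r : S -> A -> R) (P : S -> A -> S -> R) (g : R) (mu : S -> R)
  (astar : S -> A) (eta : R)
  (theta : nat -> S -> A -> R) (st : nat -> S) (at_ : nat -> A) :
  (* finite discounted MDP, rewards in [0,1] *)
  (forall s a, 0 <= r s a <= 1) ->
  (forall s a s', 0 <= P s a s') ->
  (forall s a, \sum_(s' : S) P s a s' = 1) ->
  0 <= g < 1 ->
  (* initial distribution with min_s mu(s) > 0 *)
  (forall s, 0 < mu s) -> \sum_(s : S) mu s = 1 ->
  (* pi* = det_policy astar is an optimal deterministic policy *)
  (forall pol : S -> A -> R, is_policy pol ->
     forall s, V r P g pol s <= V r P g (det_policy astar) s) ->
  (* constant learning rate *)
  0 < eta ->
  (* the iterates of the algorithm: at each t the sample (s_t, a_t) has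
     positive probability under d_mu^{pi_theta_t} x pi_theta_t, and
     theta_{t+1} is the NPG update of theta_t *)
  (forall t, 0 < dvisit P g mu (softmax (theta t)) (st t)
                 * softmax (theta t) (st t) (at_ t)) ->
  (forall t, theta t.+1 = npg_update r P g eta (theta t) (st t) (at_ t)) ->
  forall t, (1 <= t)%N ->
    (forall s0 : S,
       0 <= V r P g (softmax (theta t.+1)) s0 - V r P g (softmax (theta t)) s0)
    /\
    expected_next_Vmu r P g mu eta (theta t)
      - Vmu r P g mu (softmax (theta t))
    >= eta * (1 - g) ^+ 4 * min_mu mu / (1 + eta)
       * (dist_mismatch P g mu astar)^-1
       * (min_opt_prob (theta t) astar ^+ 2 / #|S|%:R)
       * (Vmu r P g mu (det_policy astar) - Vmu r P g mu (softmax (theta t))) ^+ 2.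
Proof.
(* Both bounds hold for the update from any parameter. *)
move=> r_bnd P_ge0 P_sum1 /andP[g_ge0 g_lt1] mu_gt0 mu_sum1 astar_opt eta_gt0
  _ theta_next t _.
have r_ge0 s a : 0 <= r s a by case/andP: (r_bnd s a).
have r_le1 s a : r s a <= 1 by case/andP: (r_bnd s a).
have a0 := at_ 0.
split=> [s0|].
  rewrite theta_next subr_ge0.
  exact: (V_npg_update_ge P_ge0 P_sum1 g_ge0 g_lt1 r a0 eta_gt0).
exact: (expected_improvement_lb P_ge0 P_sum1 g_ge0 g_lt1 r_ge0 r_le1 a0 eta_gt0
          _ mu_gt0 mu_sum1 astar_opt).
Qed.
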